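(* Let a countable group $G$ act on a set $X$, let $\Phi=(\ell,\phi,\mathcal{Z},\Gamma,\mathcal{H})$ be a chart for $G$, let $0<\epsilon<1/16$, let $q$ satisfy $6\epsilon<q<1/2$, and let $A\subseteq\mathbb{Z}^\ell\times\Gamma$ be a centered rectangle. Suppose $E$ is a $(\Phi,A,\epsilon)$-sub-rectangular equivalence relation on $X$. Let $x\in X^{\mathcal{H}}$ and $1\le i\le\ell$. If $y_1,\dots,y_t\in\partial_i^\Phi(E,q\cdot A)\cap\phi(2^{17\ell}\cdot A)\cdot x$ satisfy $$\phi\big(2^{19\ell}\cdot A^i+5q\cdot A\big)\cdot y_r\cap\phi\big(2^{19\ell}\cdot A^i+5q\cdot A\big)\cdot y_s=\varnothing$$ for all $r\ne s$, then $t\le 2^{22\ell^2}$.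
   Context: Rectangles: Let $\Gamma$ be a finite additive abelian group with identity $0_\Gamma$ and $\ell\in\mathbb{N}$. Elements $v$ of $\mathbb{R}^\ell\times\Gamma$ have coordinates $v_1,\dots,v_\ell\in\mathbb{R}$, $v_{\ell+1}\in\Gamma$; $\mathbf{0}$ has first $\ell$ coordinates $0$, last $0_\Gamma$; $e_i$ has $i$-th coordinate $1$, other real coordinates $0$, last $0_\Gamma$; $\lambda\cdot v=(\lambda v_1,\dots,\lambda v_\ell,v_{\ell+1})$. $\mathrm{Rec}(a)=\{b\in\mathbb{Z}^\ell\times\Gamma: -|a_i|\le b_i\le|a_i|,\ 1\le i\le\ell\}$. A rectangle is $c+\mathrm{Rec}(a)$ with $c,a\in\mathbb{Z}^\ell\times\Gamma$; uniquely written with center $c\in\mathbb{Z}^\ell\times\{0_\Gamma\}$ and radius vector $\mathrm{L}(A)=a\in\mathbb{N}^\ell\times\{0_\Gamma\}$, entries $\mathrm{L}_i(A)$. Centered means center $\mathbf{0}$. $A\sqsubseteq B$ means $\mathrm{L}_i(A)\le\mathrm{L}_i(B)$ for all $i$. For $\lambda>0$, $\lambda\cdot A=c+\mathrm{Rec}(\lambda\cdot\mathrm{L}(A))$ ($c$ the center of $A$). $A^i=c+\mathrm{Rec}(\mathrm{L}(A)-\mathrm{L}_i(A)\cdot e_i)$, and $\lambda\cdot A^i$ means $\lambda\cdot(A^i)$. Sums are elementwise. Charts: a chart for $G$ is $\Phi=(\ell,\phi,\mathcal{Z},\Gamma,\mathcal{H})$ with $\mathcal{H}$ a finite collection of pairwise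 conjugate subgroups of $G$, $\Gamma$ finite abelian, $\mathcal{Z}$ a centered rectangle with all $\mathrm{L}_i(\mathcal{Z})>0$, $\phi$ an injective map into $G$ with $\mathrm{dom}(\phi)$ a centered rectangle containing $3\cdot\mathcal{Z}$, $\phi(\mathbf{0})=1_G$, and for all $r,s\in\mathrm{dom}(\phi)$, $H\in\mathcal{H}$: $\phi(r)H=\phi(s)H\Rightarrow r=s$; $r+s+\mathcal{Z}\subseteq\mathrm{dom}(\phi)\Rightarrow\exists z\in\mathcal{Z}:\phi(r)\phi(s)H=\phi(r+s+z)H$; $r-s+\mathcal{Z}\subseteq\mathrm{dom}(\phi)\Rightarrow\exists z:\phi(r)\phi(s)^{-1}H=\phi(r-s+z)H$; $-r+s+\mathcal{Z}\subseteq\mathrm{dom}(\phi)\Rightarrow\exists z:\phi(r)^{-1}\phi(s)H=\phi(-r+s+z)H$; $-s+\mathcal{Z}\subseteq\mathrm{dom}(\phi)\Rightarrow\exists z:\phi(s)^{-1}H=\phi(-s+z)H$. $\phi(S)\cdot x=\{\phi(s)\cdot x:s\in S\}$; $X^{\mathcal{H}}=\{x\in X:\mathrm{Stab}(x)\in\mathcal{H}\}$. Rough rectangles: for a rectangle $B$ with $2\cdot B\subseteq\mathrm{dom}(\phi)$, $x\in X^{\mathcal{H}}$, $0<\delta<1$, $R\subseteq X$ is $(\Phi,\delta)$-roughly $B$ at $x$ if $2\cdot\mathcal{Z}\sqsubseteq\delta\cdot B$ and $\phi((1-\delta)\cdot B)\cdot x\subseteq R\subseteq\phi((1+\delta)\cdot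 B)\cdot x$. Rectangular: for $A$ centered and $0<\epsilon<1$, an equivalence relation $F$ is $(\Phi,A,\epsilon)$-rectangular if every $F$-class not meeting $X^{\mathcal{H}}$ is a singleton and every $F$-class $U$ meeting $X^{\mathcal{H}}$ is $(\Phi,\delta)$-roughly $B$ at some point of $X^{\mathcal{H}}$ for some $\delta>0$ and rectangle $B$ with $A\sqsubseteq B$, $2^{22\ell}\cdot B\subseteq\mathrm{dom}(\phi)$, $2\delta\cdot B\sqsubseteq\epsilon\cdot A$. $E$ is $(\Phi,A,\epsilon)$-sub-rectangular if it contains a $(\Phi,A,\epsilon)$-rectangular sub-equivalence relation. Boundary: for $A'\subseteq\mathrm{dom}(\phi)$ centered and $1\le i\le\ell$, $\partial_i^\Phi(E,A')$ is the set of $x\in X^{\mathcal{H}}$ with $[\phi(A'^i-\mathrm{L}_i(A')\cdot e_i)\cdot x]_E\cap[\phi(A'^i+\mathrm{L}_i(A')\cdot e_i)\cdot x]_E=\varnothing$, $[Y]_E$ denoting $E$-saturation. *)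

From HB Require Import structures.
From mathcomp Require Import all_boot all_order all_algebra.
From mathcomp Require Import Rstruct.
From Stdlib Require Rdefinitions.
Notation R := Rdefinitions.R.
Set Implicit Arguments. Unset Strict Implicit. Unset Printing Implicit Defensive.
Import Order.TTheory GRing.Theory Num.Theory.
Local Open Scope ring_scope.

Record group_on (G : Type) := GroupOn {
  gmul : G -> G -> G; gone : G; ginv : G -> G;
  gmulA : forall a b c, gmul a (gmul b c) = gmul (gmul a b) c;
  gmul1 : forall a, gmul a gone = a;
  g1mul : forall a, gmul gone a = a;
  gmulV : forall a, gmul a (ginv a) = gone;
  gVmul : forall a, gmul (ginv a) a = gone }.

Definition is_action (G X : Type) (Gg : group_on G) (act : G -> X -> X) :=
  (forall x, act (gone Gg) x = x) /\
  (forall g h x, act (gmul Gg g h) x = act g (act h x)).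

Definition is_subgroup (G : Type) (Gg : group_on G) (H : G -> Prop) :=
  H (gone Gg) /\ (forall a b, H a -> H b -> H (gmul Gg a b)) /\
  (forall a, H a -> H (ginv Gg a)).

Definition set_eq (T : Type) (S1 S2 : T -> Prop) := forall z, S1 z <-> S2 z.

Definition lcoset (G : Type) (Gg : group_on G) (g : G) (H : G -> Prop) : G -> Prop :=
  fun y => exists h, H h /\ y = gmul Gg g h.

Definition conj_set (G : Type) (Gg : group_on G) (g : G) (H : G -> Prop) : G -> Prop :=
  fun y => exists h, H h /\ y = gmul Gg (gmul Gg g h) (ginv Gg g).

Definition stab (G X : Type) (act : G -> X -> X) (x : X) : G -> Prop :=
  fun g => act g x = x.

Definition pt (l : nat) (Gam : finZmodType) := ({ffun 'I_l -> int} * Gam)%type.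

Definition padd l (Gam : finZmodType) (r s : pt l Gam) : pt l Gam :=
  ([ffun j => r.1 j + s.1 j], r.2 + s.2).
Definition popp l (Gam : finZmodType) (r : pt l Gam) : pt l Gam :=
  ([ffun j => - r.1 j], - r.2).
Definition pzero l (Gam : finZmodType) : pt l Gam := ([ffun _ => 0], 0).

Definition msum l (Gam : finZmodType) (S T : pt l Gam -> Prop) : pt l Gam -> Prop :=
  fun u => exists s t, S s /\ T t /\ u = padd s t.

(* ---------- (scaled) rectangles ----------
   A "srect" is a center c in Z^l (last coordinate 0_Gamma) together with a real
   radius vector a; it denotes the set c + Rec(a) = {b | |b_j - c_j| <= |a_j|}.  The scaled
   rectangle lambda.A has radius lambda.L(A); as a set it is the rectangle with
   radius floor(lambda.L(A)), so its radius vector L is the floor. *)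
Record srect (l : nat) := SRect { sc : {ffun 'I_l -> int}; sr : {ffun 'I_l -> R} }.

Definition rset l (Gam : finZmodType) (S : srect l) : pt l Gam -> Prop :=
  fun b => forall j, ((`|b.1 j - sc S j|)%:~R : R) <= `|sr S j|.

Definition is_rect l (S : srect l) := forall j, exists n : nat, sr S j = n%:R.
Definition is_centered_rect l (S : srect l) := is_rect S /\ forall j, sc S j = 0.

Definition Lr l (S : srect l) (j : 'I_l) : int := Num.floor `|sr S j|.

Definition rle l (S T : srect l) := forall j, Lr S j <= Lr T j.

Definition scale l (lam : R) (S : srect l) : srect l :=
  SRect (sc S) [ffun j => lam * sr S j].

Definition face l (S : srect l) (i : 'I_l) : srect l :=
  SRect (sc S) [ffun j => if j == i then 0 else sr S j].

Definition shift l (S : srect l) (i : 'I_l) (k : int) : srect l :=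
  SRect [ffun j => sc S j + (if j == i then k else 0)] (sr S).

Definition subset (T : Type) (S1 S2 : T -> Prop) := forall z, S1 z -> S2 z.

Record chart (G : Type) (l : nat) (Gam : finZmodType) := Chart {
  ch_phi : pt l Gam -> G;
  ch_dom : srect l;
  ch_Z : srect l;
  ch_H : seq (G -> Prop) }.

Definition is_chart (G : Type) (Gg : group_on G) l (Gam : finZmodType)
    (Phi : chart G l Gam) : Prop :=
  let phi := ch_phi Phi in
  let D := rset (Gam:=Gam) (ch_dom Phi) in
  let Z := rset (Gam:=Gam) (ch_Z Phi) in
  let mul := gmul Gg in let inv := ginv Gg in
  (forall H, List.In H (ch_H Phi) -> is_subgroup Gg H) /\
  (forall H1 H2, List.In H1 (ch_H Phi) -> List.In H2 (ch_H Phi) ->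
      exists g, set_eq H2 (conj_set Gg g H1)) /\
  is_centered_rect (ch_Z Phi) /\ (forall j, 0 < Lr (ch_Z Phi) j) /\
  is_centered_rect (ch_dom Phi) /\
  subset (rset (Gam:=Gam) (scale 3 (ch_Z Phi))) D /\
  (forall r s, D r -> D s -> phi r = phi s -> r = s) /\
  phi (pzero l Gam) = gone Gg /\
  (forall r s H, D r -> D s -> List.In H (ch_H Phi) ->
    (set_eq (lcoset Gg (phi r) H) (lcoset Gg (phi s) H) -> r = s) /\
    (subset (fun u => exists z, Z z /\ u = padd (padd r s) z) D ->
       exists z, Z z /\ set_eq (lcoset Gg (mul (phi r) (phi s)) H)
                               (lcoset Gg (phi (padd (padd r s) z)) H)) /\
    (subset (fun u => exists z, Z z /\ u = padd (padd r (popp s)) z) D ->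
       exists z, Z z /\ set_eq (lcoset Gg (mul (phi r) (inv (phi s))) H)
                               (lcoset Gg (phi (padd (padd r (popp s)) z)) H)) /\
    (subset (fun u => exists z, Z z /\ u = padd (padd (popp r) s) z) D ->
       exists z, Z z /\ set_eq (lcoset Gg (mul (inv (phi r)) (phi s)) H)
                               (lcoset Gg (phi (padd (padd (popp r) s) z)) H)) /\
    (subset (fun u => exists z, Z z /\ u = padd (popp s) z) D ->
       exists z, Z z /\ set_eq (lcoset Gg (inv (phi s)) H)
                               (lcoset Gg (phi (padd (popp s) z)) H))).

Definition inXH (G X : Type) (act : G -> X -> X) l (Gam : finZmodType)
    (Phi : chart G l Gam) (x : X) : Prop :=
  exists H, List.In H (ch_H Phi) /\ set_eq (stab act x) H.

(* phi(S) . w  (points of S outside dom(phi) are ignored; in all uses S ⊆ dom) *)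
Definition phiset (G X : Type) (act : G -> X -> X) l (Gam : finZmodType)
    (Phi : chart G l Gam) (S : pt l Gam -> Prop) (w : X) : X -> Prop :=
  fun z => exists s, S s /\ rset (Gam:=Gam) (ch_dom Phi) s /\ z = act (ch_phi Phi s) w.

Definition sat (X : Type) (E : X -> X -> Prop) (Y : X -> Prop) : X -> Prop :=
  fun z => exists y, Y y /\ E y z.

Definition is_equiv (X : Type) (E : X -> X -> Prop) :=
  (forall x, E x x) /\ (forall x y, E x y -> E y x) /\
  (forall x y z, E x y -> E y z -> E x z).

Definition roughly (G X : Type) (act : G -> X -> X) l (Gam : finZmodType)
    (Phi : chart G l Gam) (delta : R) (B : srect l) (w : X) (U : X -> Prop) :=
  is_rect B /\ subset (rset (Gam:=Gam) (scale 2 B)) (rset (Gam:=Gam) (ch_dom Phi)) /\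
  inXH act Phi w /\ 0 < delta < 1 /\
  rle (scale 2 (ch_Z Phi)) (scale delta B) /\
  subset (phiset act Phi (rset (Gam:=Gam) (scale (1 - delta) B)) w) U /\
  subset U (phiset act Phi (rset (Gam:=Gam) (scale (1 + delta) B)) w).

Definition rectangular (G X : Type) (act : G -> X -> X) l (Gam : finZmodType)
    (Phi : chart G l Gam) (A : srect l) (eps : R) (F : X -> X -> Prop) :=
  is_equiv F /\
  (forall x, ~ (exists y, F x y /\ inXH act Phi y) -> forall y, F x y -> y = x) /\
  (forall x, (exists y, F x y /\ inXH act Phi y) ->
     exists delta B w,
       inXH act Phi w /\ 0 < delta /\
       roughly act Phi delta B w (F x) /\
       rle A B /\
       subset (rset (Gam:=Gam) (scale (2 ^+ (22 * l))%:R B)) (rset (Gam:=Gam) (ch_dom Phi)) /\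
       rle (scale (2 * delta) B) (scale eps A)).

Definition sub_rectangular (G X : Type) (act : G -> X -> X) l (Gam : finZmodType)
    (Phi : chart G l Gam) (A : srect l) (eps : R) (E : X -> X -> Prop) :=
  exists F, rectangular act Phi A eps F /\ (forall x y, F x y -> E x y).

Definition boundary (G X : Type) (act : G -> X -> X) l (Gam : finZmodType)
    (Phi : chart G l Gam) (E : X -> X -> Prop) (A' : srect l) (i : 'I_l) (x : X) :=
  inXH act Phi x /\
  forall z,
    ~ (sat E (phiset act Phi (rset (Gam:=Gam) (shift (face A' i) i (- Lr A' i))) x) z /\
       sat E (phiset act Phi (rset (Gam:=Gam) (shift (face A' i) i (Lr A' i))) x) z).

From Pilot Require Import Defs.
From HB Require Import structures.
From mathcomp Require Import all_boot all_order all_algebra.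
From mathcomp Require Import Rstruct.
From mathcomp Require Import lra zify.
From Stdlib Require Classical_Prop.
Import Order.TTheory GRing.Theory Num.Theory.
Local Open Scope ring_scope.
Set Implicit Arguments. Unset Strict Implicit. Unset Printing Implicit Defensive.

(* Let [F] be a rectangular subrelation of [E].  As [F] is finer than [E], every [y_r]
   still lies on the i-boundary of [F], so its F-class misses one of the two i-faces of
   [phi(q.A) . y_r].  Each F-class is roughly a rectangle [B] with [A ⊑ B] and [2 delta B ⊑ eps A],
   so its core contains a point [phi(g) . x] with [g] on a fixed grid of mesh about [A/2]
   covering [2^(17 l) . A]; the grid has [(2^(17 l + 4))^l] points.  Label [y_r] by such a
   grid point and by the side of the face it misses.  Two points with the same label are
   F-equivalent and miss the same face, so both lie within about [q A_i] of the same i-side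
   of their class: they are less than [10 q A_i] apart in direction [i] and less than
   [2^(19 l) A_j] apart in the others, so the two translates of [2^(19 l) A^i + 5q A] meet.
   Hence the labelling is injective and [t <= 2 (2^(17 l + 4))^l <= 2^(22 l^2)]. *)

Section Action.
Variables (G X : Type) (Gg : group_on G) (act : G -> X -> X).
Hypothesis Hact : is_action Gg act.

Lemma act_mul g h x : act (gmul Gg g h) x = act g (act h x).
Proof. by case: Hact => _ ->. Qed.

Lemma act_invK g x : act (ginv Gg g) (act g x) = x.
Proof. by rewrite -act_mul gVmul; case: Hact. Qed.

Lemma act_eq_of_lcoset_eq g g' H y : is_subgroup Gg H -> set_eq (stab act y) H ->
  set_eq (lcoset Gg g H) (lcoset Gg g' H) -> act g y = act g' y.
Proof.
move=> [H1 _] Hst Hc.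
have : lcoset Gg g H g by exists (gone Gg); rewrite gmul1.
move=> /Hc [h [Hh ->]]; rewrite act_mul.
by move: (proj2 (Hst h) Hh); rewrite /stab => ->.
Qed.

Lemma lcoset_eq_of_act_eq g g' H y : is_subgroup Gg H -> set_eq (stab act y) H ->
  act g y = act g' y -> set_eq (lcoset Gg g H) (lcoset Gg g' H).
Proof.
move=> [_ [HM _]] Hst.
have incl a a' : act a y = act a' y -> forall u, lcoset Gg a H u -> lcoset Gg a' H u.
  move=> Ha u [h [Hh ->]].
  have Hs : H (gmul Gg (ginv Gg a') a) by apply/Hst; rewrite /stab act_mul Ha act_invK.
  exists (gmul Gg (gmul Gg (ginv Gg a') a) h); split; first exact: HM.
  by rewrite !gmulA gmulV g1mul.
by move=> He u; split; apply: incl.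
Qed.
End Action.

Lemma nat_le_of_floor_le (n : nat) (y : R) : Num.floor (n%:R : R) <= Num.floor y -> n%:R <= y.
Proof. by rewrite pmulrn intrKfloor floor_ge_int -pmulrn. Qed.

Lemma lt_addr1_of_floor_le (x y : R) : Num.floor x <= Num.floor y -> x < y + 1.
Proof.
move=> H; apply: (lt_le_trans (floorD1_gt x)).
rewrite intrD lerD2r; apply: le_trans (floor_le y); by rewrite ler_int.
Qed.

Lemma norm_bounds (x : R) : - `|x| <= x <= `|x|.
Proof. by rewrite -ler_norml. Qed.

Lemma int_multiple_in_intervals (m lo1 lo2 hi1 hi2 : R) : 0 < m ->
  lo1 + m <= hi1 -> lo1 + m <= hi2 -> lo2 + m <= hi1 -> lo2 + m <= hi2 ->
  exists k : int, [/\ lo1 <= k%:~R * m, k%:~R * m <= hi1, lo2 <= k%:~R * m & k%:~R * m <= hi2].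
Proof.
move=> m0 h11 h12 h21 h22.
pose h := Num.min hi1 hi2.
have [e1 e2 e3 e4] : [/\ h <= hi1, h <= hi2, lo1 + m <= h & lo2 + m <= h].
  by split; rewrite /h ?ge_min ?le_min ?lexx ?h11 ?h12 ?h21 ?h22 ?orbT.
exists (Num.floor (h / m)).
have g1 : (Num.floor (h / m))%:~R * m <= h by rewrite -ler_pdivlMr // floor_le.
have g2 : h < (Num.floor (h / m))%:~R * m + m.
  rewrite -[X in _ < _ + X]mul1r -mulrDl -ltr_pdivrMr // -[1]/(1%:~R) -intrD.
  exact: floorD1_gt.
split; lra.
Qed.

Section ChartCalculus.
Variables (G X : Type) (Gg : group_on G) (act : G -> X -> X).
Hypothesis Hact : is_action Gg act.
Variables (l : nat) (Gam : finZmodType) (Phi : chart G l Gam).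
Hypothesis HPhi : is_chart Gg Phi.

Local Notation phi := (ch_phi Phi).
Local Notation Dom := (rset (Gam:=Gam) (ch_dom Phi)).
Local Notation Zs := (rset (Gam:=Gam) (ch_Z Phi)).
Local Notation XH := (inXH act Phi).

Lemma chart_subgroup H : List.In H (ch_H Phi) -> is_subgroup Gg H.
Proof. by case: HPhi => h _; apply: h. Qed.

Lemma chart_coset_rules r s H : Dom r -> Dom s -> List.In H (ch_H Phi) ->
    (set_eq (lcoset Gg (phi r) H) (lcoset Gg (phi s) H) -> r = s) /\
    (Defs.subset (fun u => exists z, Zs z /\ u = padd (padd r s) z) Dom ->
       exists z, Zs z /\ set_eq (lcoset Gg (gmul Gg (phi r) (phi s)) H)
                               (lcoset Gg (phi (padd (padd r s) z)) H)) /\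
    (Defs.subset (fun u => exists z, Zs z /\ u = padd (padd r (popp s)) z) Dom ->
       exists z, Zs z /\ set_eq (lcoset Gg (gmul Gg (phi r) (ginv Gg (phi s))) H)
                               (lcoset Gg (phi (padd (padd r (popp s)) z)) H)).
Proof.
case: HPhi => _ [_ [_ [_ [_ [_ [_ [_ Hr]]]]]]] Dr Ds HH.
by case: (Hr r s H Dr Ds HH) => [h1 [h2 [h3 _]]].
Qed.

Lemma phi_act_inj y u v : XH y -> Dom u -> Dom v -> act (phi u) y = act (phi v) y -> u = v.
Proof.
move=> [H [HH Hst]] Du Dv He.
case: (chart_coset_rules Du Dv HH) => [Hi _]; apply: Hi.
exact: (lcoset_eq_of_act_eq Hact (chart_subgroup HH) Hst He).
Qed.

Lemma phi_act_mul y u b : XH y -> Dom u -> Dom b ->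
  Defs.subset (fun v => exists z, Zs z /\ v = padd (padd u b) z) Dom ->
  exists z, Zs z /\ act (phi u) (act (phi b) y) = act (phi (padd (padd u b) z)) y.
Proof.
move=> [H [HH Hst]] Du Db Hs.
case: (chart_coset_rules Du Db HH) => [_ [Hm _]].
case: (Hm Hs) => z [Hz Hc]; exists z; split => //.
rewrite -(act_mul Hact); exact: (act_eq_of_lcoset_eq Hact (chart_subgroup HH) Hst Hc).
Qed.

Lemma phi_act_rebase y y' u b : XH y' -> Dom u -> Dom b -> y' = act (phi b) y ->
  Defs.subset (fun v => exists z, Zs z /\ v = padd (padd u (popp b)) z) Dom ->
  exists z, Zs z /\ act (phi u) y = act (phi (padd (padd u (popp b)) z)) y'.
Proof.
move=> [H [HH Hst]] Du Db Hb Hs.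
case: (chart_coset_rules Du Db HH) => [_ [_ Hm]].
case: (Hm Hs) => z [Hz Hc]; exists z; split => //.
have -> : y = act (ginv Gg (phi b)) y' by rewrite Hb (act_invK Hact).
rewrite -(act_mul Hact); exact: (act_eq_of_lcoset_eq Hact (chart_subgroup HH) Hst Hc).
Qed.

Definition crd (u : pt l Gam) (j : 'I_l) : R := (u.1 j)%:~R.
Definition rad_dom (j : 'I_l) : R := `|sr (ch_dom Phi) j|.
Definition rad_Z (j : 'I_l) : R := `|sr (ch_Z Phi) j|.

Lemma crdD u v j : crd (padd u v) j = crd u j + crd v j.
Proof. by rewrite /crd /padd /= ffunE intrD. Qed.

Lemma crdN u j : crd (popp u) j = - crd u j.
Proof. by rewrite /crd /popp /= ffunE intrN. Qed.

Lemma rsetP (S : srect l) b :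
  rset (Gam:=Gam) S b <-> forall j, `|crd b j - (sc S j)%:~R| <= `|sr S j|.
Proof. by rewrite /rset /crd; split => H j; move: (H j); rewrite intr_norm intrB. Qed.

Lemma rset_centeredP (S : srect l) b : (forall j, sc S j = 0) ->
  (rset (Gam:=Gam) S b <-> forall j, `|crd b j| <= `|sr S j|).
Proof. by move=> H0; rewrite rsetP; split => H j; move: (H j); rewrite H0 subr0. Qed.

Lemma domP u : Dom u <-> forall j, `|crd u j| <= rad_dom j.
Proof. by apply: rset_centeredP; case: HPhi => _ [_ [_ [_ [[_ h] _]]]]. Qed.

Lemma Z_rect : is_centered_rect (ch_Z Phi).
Proof. by case: HPhi => _ [_ [h _]]. Qed.

Lemma crd_Z z : Zs z -> forall j, `|crd z j| <= rad_Z j.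
Proof. by move/rset_centeredP; apply; case: Z_rect. Qed.

Lemma rad_Z_ge1 j : 1 <= rad_Z j.
Proof. by case: HPhi => _ [_ [_ [h _]]]; move: (h j); rewrite /Lr floor_gt0. Qed.

Lemma dom_addZ u : (forall j, `|crd u j| + rad_Z j <= rad_dom j) ->
  Defs.subset (fun v => exists z, Zs z /\ v = padd u z) Dom.
Proof.
move=> H v [z [Hz ->]]; apply/domP => j.
rewrite crdD; apply: le_trans (ler_normD _ _) (le_trans _ (H j)).
by rewrite lerD2l; apply: crd_Z.
Qed.

Lemma phi_act_relative y y1 y2 s1 s2 : XH y1 -> Dom s1 -> Dom s2 ->
  y1 = act (phi s1) y -> y2 = act (phi s2) y ->
  (forall j, `|crd s2 j - crd s1 j| + rad_Z j <= rad_dom j) ->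
  exists z, [/\ Zs z, Dom (padd (padd s2 (popp s1)) z) &
              y2 = act (phi (padd (padd s2 (popp s1)) z)) y1].
Proof.
move=> Hy1 D1 D2 E1 E2 Hb.
have Hs : Defs.subset (fun v => exists z, Zs z /\ v = padd (padd s2 (popp s1)) z) Dom.
  by apply: dom_addZ => j; rewrite crdD crdN.
case: (phi_act_rebase Hy1 D2 D1 E1 Hs) => z [Hz He].
by exists z; split => //; [apply: Hs; exists z|rewrite E2].
Qed.
End ChartCalculus.

Section RoughRectangles.
Variables (G X : Type) (Gg : group_on G) (act : G -> X -> X).
Hypothesis Hact : is_action Gg act.
Variables (l : nat) (Gam : finZmodType) (Phi : chart G l Gam).
Hypothesis HPhi : is_chart Gg Phi.
Variables (eps q : R) (A : srect l) (i : 'I_l).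
Hypothesis Heps : 0 < eps < 1 / 16.
Hypothesis Hq : 6 * eps < q < 1 / 2.
Hypothesis HA : is_centered_rect A.

Local Notation phi := (ch_phi Phi).
Local Notation Dom := (rset (Gam:=Gam) (ch_dom Phi)).
Local Notation Zs := (rset (Gam:=Gam) (ch_Z Phi)).
Local Notation XH := (inXH act Phi).
Local Notation rad_dom := (rad_dom Phi).
Local Notation rad_Z := (rad_Z Phi).
Local Notation domP := (domP HPhi).
Local Notation crd_Z := (crd_Z HPhi).
Local Notation rad_Z_ge1 := (rad_Z_ge1 HPhi).
Local Notation dom_addZ := (dom_addZ HPhi).
Local Notation phi_act_mul := (phi_act_mul Hact HPhi).
Local Notation phi_act_rebase := (phi_act_rebase Hact HPhi).
Local Notation phi_act_relative := (phi_act_relative Hact HPhi).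
Local Notation phi_act_inj := (phi_act_inj Hact HPhi).

Definition rad_A (j : 'I_l) : R := `|sr A j|.
Definition pow2l (k : nat) : R := (2 ^+ (k * l))%:R.

Lemma rad_A_ge0 j : 0 <= rad_A j. Proof. exact: normr_ge0. Qed.

Lemma q_gt0 : 0 < q.
Proof. by case/andP: Heps => e0 _; case/andP: Hq => q0 _; lra. Qed.

Lemma qrad_A_ge0 j : 0 <= q * rad_A j.
Proof. by rewrite mulr_ge0 ?rad_A_ge0 // ltW // q_gt0. Qed.

Lemma pow2l_ge1 k : 1 <= pow2l k.
Proof. by rewrite /pow2l ler1n expn_gt0. Qed.

Lemma l_gt0 : (0 < l)%N.
Proof. by case: i => k; case: l. Qed.

Lemma pow2l_facts : [/\ 1 <= pow2l 17, 4 * pow2l 17 <= pow2l 19 & 8 * pow2l 19 <= pow2l 22].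
Proof.
have lp := l_gt0.
rewrite /pow2l !natrXE; split.
- by rewrite ler1n expn_gt0.
- rewrite -[4]/((2^2)%N)%:R -natrM ler_nat -expnD leq_exp2l //; lia.
- rewrite -[8]/((2^3)%N)%:R -natrM ler_nat -expnD leq_exp2l //; lia.
Qed.

Lemma sr_scale lam (S : srect l) j : sr (scale lam S) j = lam * sr S j.
Proof. by rewrite /scale /= ffunE. Qed.

Lemma nat_radius (S : srect l) j : is_rect S -> exists n : nat, `|sr S j| = n%:R.
Proof. by move=> H; case: (H j) => n ->; exists n; exact: normr_nat. Qed.

(* Test the domain against the corner of [2^(22 l) . B] pointing away from the origin. *)
Lemma scaled_rect_dom_bound (B : srect l) : is_rect B ->
  Defs.subset (rset (Gam:=Gam) (scale (pow2l 22) B)) Dom ->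
  forall j, `|(sc B j)%:~R| + pow2l 22 * `|sr B j| <= rad_dom j.
Proof.
move=> HB Hs j.
case: (nat_radius j HB) => m Hm.
set c := sc B j.
pose n : int := (2 ^+ (22 * l) * m)%N%:Z.
have nR : (n%:~R : R) = pow2l 22 * `|sr B j| by rewrite Hm /n /pow2l -pmulrn natrM.
pose p : pt l Gam := ([ffun j' => sc B j' + (if j' == j then (if c < 0 then - n else n) else 0)], 0).
have Hp : rset (Gam:=Gam) (scale (pow2l 22) B) p.
  apply/rsetP => j'; rewrite /crd /p /= ffunE sr_scale /=.
  case: eqP => [->|_].
    rewrite intrD addrC addKr normrM (@ger0_norm _ (pow2l 22)) ?ler0n //.
    by rewrite -nR; case: (c < 0); rewrite ?intrN ?normrN ger0_norm // ler0z.
  by rewrite addr0 subrr normr0.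
move: (Hs _ Hp) => /domP /(_ j); rewrite /crd /p /= ffunE eqxx -/c.
have n0 : (0 : R) <= n%:~R by rewrite ler0z.
case: ltrP => hc; rewrite ?intrN intrD -nR.
  rewrite (ltr0_norm (x:=c%:~R)) ?ltrz0 // ler_norml => /andP[h _].
  have : (c%:~R : R) < 0 by rewrite ltrz0.
  lra.
rewrite (ger0_norm (x:=c%:~R)) ?ler0z // ler_norml => /andP[_ h]; lra.
Qed.

Definition rect_witness delta (B : srect l) (w : X) (U : X -> Prop) :=
  [/\ roughly act Phi delta B w U, rle A B,
      Defs.subset (rset (Gam:=Gam) (scale (pow2l 22) B)) Dom &
      rle (scale (2 * delta) B) (scale eps A)].

Lemma witness_bounds delta (B : srect l) w U : rect_witness delta B w U -> forall j,
  [/\ rad_A j <= `|sr B j|, 2 * rad_Z j <= delta * `|sr B j|,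
      2 * (delta * `|sr B j|) < eps * rad_A j + 1,
      `|(sc B j)%:~R| + pow2l 22 * `|sr B j| <= rad_dom j & 0 < delta < 1].
Proof.
move=> [[HB [_ [_ [Hd [HZ _]]]]] HAB H22 H2] j.
have d0 : 0 < delta by case/andP: Hd.
split => //.
- case: HA => HAr _; move: (HAB j); rewrite /Lr /rad_A; case: (HAr j) => n ->.
  by rewrite normr_nat; exact: nat_le_of_floor_le.
- case: (Z_rect HPhi) => HZr _; move: (HZ j); rewrite /Lr /rad_Z !sr_scale.
  case: (HZr j) => n ->; rewrite (normrM delta) (gtr0_norm d0) -natrM !normr_nat.
  by move/nat_le_of_floor_le; rewrite natrM.
- move: (H2 j) => /lt_addr1_of_floor_le; rewrite /Lr !sr_scale !normrM /rad_A.
  have e0 : 0 < eps by case/andP: Heps.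
  by rewrite normr_nat (gtr0_norm d0) (gtr0_norm e0) mulrA.
- exact: scaled_rect_dom_bound.
Qed.

Lemma witness_param_bounds j (D beta : R) :
  rad_A j <= beta -> 2 * rad_Z j <= D -> 2 * D < eps * rad_A j + 1 ->
  [/\ 3 < eps * rad_A j, 6 * (eps * rad_A j) <= q * rad_A j, 16 * (eps * rad_A j) <= rad_A j,
      2 * (q * rad_A j) <= rad_A j & 0 <= q * rad_A j].
Proof.
move=> h1 h2 h3.
have z1 := rad_Z_ge1 j; have a0 := rad_A_ge0 j.
case/andP: Heps => e0 e1; case/andP: Hq => q0 q1.
split; rewrite ?qrad_A_ge0 //; first lra.
- by rewrite mulrA; apply: ler_wpM2r => //; lra.
- by rewrite mulrA -[X in _ <= X]mul1r; apply: ler_wpM2r => //; lra.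
- by rewrite mulrA -[X in _ <= X]mul1r; apply: ler_wpM2r => //; lra.
Qed.

Lemma rad_A_pow2l_bounds j :
  [/\ 0 <= rad_A j, rad_A j <= pow2l 17 * rad_A j,
      4 * (pow2l 17 * rad_A j) <= pow2l 19 * rad_A j
    & 8 * (pow2l 19 * rad_A j) <= pow2l 22 * rad_A j].
Proof.
have a0 := rad_A_ge0 j; case: pow2l_facts => n1 n2 n3.
by split; rewrite // ?mulrA ?ler_wpM2r // ler_peMl.
Qed.

Lemma radius_pow2l_bounds (delta bt : R) j : rad_A j <= bt -> 0 < delta < 1 ->
  [/\ pow2l 22 * rad_A j <= pow2l 22 * bt, 32 * bt <= pow2l 22 * bt,
      delta * bt <= bt & 0 <= delta * bt].
Proof.
move=> h /andP[d0 d1]; case: pow2l_facts => n1 n2 n3.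
have a0 := rad_A_ge0 j; have b0 : 0 <= bt by lra.
have N1 := pow2l_ge1 22.
split.
- by rewrite ler_wpM2l //; lra.
- by apply: ler_wpM2r => //; lra.
- by rewrite ler_piMl // ltW.
- by rewrite mulr_ge0 // ltW.
Qed.

Definition coord_bounds delta (B : srect l) j :=
  [/\ rad_Z j <= rad_A j, 2 * rad_Z j + 1 <= 10 * (q * rad_A j),
      pow2l 19 * rad_A j + 5 * (q * rad_A j) <= rad_dom j,
      2 * (pow2l 17 * rad_A j) + 2 * rad_Z j <= pow2l 19 * rad_A j &
      [/\ 2 * (`|sr B j| + delta * `|sr B j|) + rad_Z j <= rad_dom j - `|(sc B j)%:~R|,
          2 * (pow2l 17 * rad_A j) + rad_Z j <= rad_dom j &
          rad_A j <= pow2l 17 * rad_A j]].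

Lemma witness_coord_bounds delta (B : srect l) w U :
  rect_witness delta B w U -> forall j, coord_bounds delta B j.
Proof.
move=> W j; case: (witness_bounds W j) => h1 h2 h3 h4 hd.
case: (witness_param_bounds h1 h2 h3) => n1 n2 n3 n4 n5.
case: (rad_A_pow2l_bounds j) => a1 a2 a3 a4.
case: (radius_pow2l_bounds h1 hd) => b1 b2 b3 b4.
have z1 := rad_Z_ge1 j; have c0 := normr_ge0 ((sc B j)%:~R : R).
by split; try split; lra.
Qed.

Lemma rough_outer_coords delta (B : srect l) w U y : rect_witness delta B w U -> U y ->
  exists b, [/\ Dom b, y = act (phi b) w &
                forall j, `|crd b j - (sc B j)%:~R| <= `|sr B j| + delta * `|sr B j|].
Proof.
move=> [[_ [_ [_ [/andP[d0 _] [_ [_ Hout]]]]]] _ _ _] Uy.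
case: (Hout y Uy) => b [/rsetP Hb [Db ->]]; exists b; split => // j.
move: (Hb j); rewrite sr_scale normrM (gtr0_norm (x := 1 + delta)) ?mulrDl ?mul1r //.
lra.
Qed.

(* The core of a rough rectangle, shrunk by [Z] to absorb the chart's error term, lies in the class. *)
Lemma rough_core_mem delta (B : srect l) w U y b v :
  rect_witness delta B w U -> Dom b -> y = act (phi b) w -> Dom v ->
  (forall j, `|crd v j - ((sc B j)%:~R - crd b j)| <= `|sr B j| - delta * `|sr B j| - rad_Z j) ->
  U (act (phi v) y).
Proof.
move=> W Db -> Dv Hv.
have F := witness_bounds W.
case: W => [[_ [_ [Hw [_ [_ [Hcore _]]]]]] _ _ _].
have Hs : Defs.subset (fun u => exists z, Zs z /\ u = padd (padd v b) z) Dom.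
  apply: dom_addZ => j; case: (F j) => _ h2 _ h4 /andP[d0 d1].
  move: (Hv j); rewrite crdD ler_norml => /andP[e1 e2].
  have n1 := norm_bounds ((sc B j)%:~R : R); have N1 := pow2l_ge1 22.
  have Nb : `|sr B j| <= pow2l 22 * `|sr B j| by rewrite ler_peMl.
  have db0 : 0 <= delta * `|sr B j| by rewrite mulr_ge0 // ltW.
  have z1 := rad_Z_ge1 j.
  rewrite -lerBrDr ler_norml; apply/andP; split; lra.
case: (phi_act_mul Hw Dv Db Hs) => z [Hz ->].
apply: Hcore; exists (padd (padd v b) z); split; last by split => //; apply: Hs; exists z.
apply/rsetP => j; rewrite sr_scale normrM !crdD.
case: (F j) => _ _ _ _ /andP[d0 d1].
rewrite (ger0_norm (x:= 1 - delta)); last lra.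
move: (Hv j) (crd_Z Hz j); rewrite !ler_norml => /andP[e1 e2] /andP[f1 f2].
by apply/andP; split; rewrite mulrBl mul1r; lra.
Qed.

Definition face_miss (U : X -> Prop) (y : X) (k : int) :=
  forall v, rset (Gam:=Gam) (shift (face (scale q A) i) i k) v -> Dom v -> ~ U (act (phi v) y).

Lemma face_rset_mem k (n : 'I_l -> int) :
  (forall j, j != i -> `|(n j)%:~R| <= q * rad_A j) ->
  rset (Gam:=Gam) (shift (face (scale q A) i) i k) ([ffun j => if j == i then k else n j], 0).
Proof.
move=> Hn; apply/rsetP => j; rewrite /crd /= !ffunE.
case: HA => _ ->; rewrite add0r.
case: (boolP (j == i)) => hj; first by rewrite subrr normr0.
by rewrite subr0 normrM (gtr0_norm q_gt0); exact: Hn.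
Qed.

(* A point in the face lying in the core would belong to the class. *)
Lemma face_miss_outside_core delta (B : srect l) w U y b k :
  rect_witness delta B w U -> Dom b -> y = act (phi b) w ->
  (forall j, `|crd b j - (sc B j)%:~R| <= `|sr B j| + delta * `|sr B j|) ->
  `|(k%:~R : R)| <= q * rad_A i -> face_miss U y k ->
  ~ (`|k%:~R - ((sc B i)%:~R - crd b i)| <= `|sr B i| - delta * `|sr B i| - rad_Z i).
Proof.
move=> W Db Hy Hout Hk Hm Hki.
have F := witness_bounds W.
have : forall j, exists n : int, j != i ->
    `|(n%:~R : R)| <= q * rad_A j /\
    `|n%:~R - ((sc B j)%:~R - crd b j)| <= `|sr B j| - delta * `|sr B j| - rad_Z j.
  move=> j; clear Hy; case: (F j) => h1 h2 h3 h4 /andP[d0 d1].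
  case: (witness_param_bounds h1 h2 h3) => n1 n2 n3 n4 n5.
  move: (Hout j); rewrite ler_norml => /andP[o1 o2].
  have db0 : 0 <= delta * `|sr B j| by rewrite mulr_ge0 // ltW.
  have z1 := rad_Z_ge1 j.
  have [n [e1 e2 e3 e4]] := @int_multiple_in_intervals 1
    ((sc B j)%:~R - crd b j - (`|sr B j| - delta * `|sr B j| - rad_Z j)) (- (q * rad_A j))
    ((sc B j)%:~R - crd b j + (`|sr B j| - delta * `|sr B j| - rad_Z j)) (q * rad_A j)
    ltac:(lra) ltac:(lra) ltac:(lra) ltac:(lra) ltac:(lra).
  rewrite !mulr1 in e1 e2 e3 e4; exists n => _.
  by rewrite !ler_norml; split; apply/andP; split; lra.
case/fin_all_exists => n Hn.
pose v : pt l Gam := ([ffun j => if j == i then k else n j], 0).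
have crv j : crd v j = (if j == i then k else n j)%:~R by rewrite /crd /v /= ffunE.
have Dv : Dom v.
  apply/domP => j; rewrite crv; clear Hy.
  case: (F j) => h1 h2 h3 h4 /andP[d0 d1].
  case: (witness_param_bounds h1 h2 h3) => n1 n2 n3 n4 n5.
  have db0 : 0 <= delta * `|sr B j| by rewrite mulr_ge0 // ltW.
  have Nb : `|sr B j| <= pow2l 22 * `|sr B j| by rewrite ler_peMl // pow2l_ge1.
  have c0 := normr_ge0 ((sc B j)%:~R : R).
  have hq : `|(if j == i then k else n j)%:~R : R| <= q * rad_A j.
    by case: (boolP (j == i)) => hj; [rewrite (eqP hj)|case: (Hn j hj)].
  lra.
apply: (Hm v _ Dv); first by apply: face_rset_mem => j hj; case: (Hn j hj).
apply: (rough_core_mem W Db Hy Dv) => j; rewrite crv.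
by case: (boolP (j == i)) => hj; [rewrite (eqP hj)|case: (Hn j hj)].
Qed.

Lemma face_offset_bounds :
  [/\ q * rad_A i - 1 < ((Lr (scale q A) i)%:~R : R), ((Lr (scale q A) i)%:~R : R) <= q * rad_A i
    & 0 <= ((Lr (scale q A) i)%:~R : R)].
Proof.
rewrite /Lr sr_scale normrM (gtr0_norm q_gt0) -/(rad_A i).
have f1 := floor_le (q * rad_A i); have f2 := floorD1_gt (q * rad_A i).
have := qrad_A_ge0 i; rewrite -floor_ge0 -(ler_int R) intrD in f2 *.
by split; lra.
Qed.

(* Both points sit within [|k| + 2 delta B_i + Z_i] of the same i-side of the core, so
   their i-coordinates differ by less than [10 q A_i - Z_i - 1]. *)
Lemma missed_face_offsets_close (bt D zt Q E kk er es dz Di : R) :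
  1 <= zt -> 2 * zt <= D -> 2 * D < E + 1 -> 6 * E <= Q -> 0 <= D ->
  `|er| <= bt + D -> `|es| <= bt + D -> Q - 1 < `|kk| -> `|kk| <= Q ->
  ~ (`|kk - er| <= bt - D - zt) -> ~ (`|kk - es| <= bt - D - zt) ->
  Di = er - es + dz -> `|dz| <= zt -> 10 * Q - zt - 1 < `|Di| -> False.
Proof.
move=> h1 h2 h3 h4 h5 her hes hk1 hk2 hfr hfs hD hdz hDi.
move/negP: hfr; rewrite -ltNge ltr_normr => /orP hfr.
move/negP: hfs; rewrite -ltNge ltr_normr => /orP hfs.
move: her hes hdz; rewrite !ler_norml => /andP[r1 r2] /andP[s1 s2] /andP[d1 d2].
move: hDi; rewrite hD ltr_normr => /orP hDi.
case: (lerP 0 kk) => hk; [rewrite ger0_norm // in hk1 hk2|rewrite ltr0_norm // in hk1 hk2];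
  by case: hfr => ?; case: hfs => ?; case: hDi => ?; lra.
Qed.

Definition sep_box := msum (rset (Gam:=Gam) (scale (pow2l 19) (face A i)))
                           (rset (Gam:=Gam) (scale (5 * q) A)).

Lemma sep_box_mem s : (forall j, j != i -> `|crd s j| <= pow2l 19 * rad_A j) ->
  `|crd s i| <= 5 * (q * rad_A i) -> sep_box s.
Proof.
move=> H1 H2; case: HA => _ HA0.
exists ([ffun j => if j == i then 0 else s.1 j], s.2).
exists ([ffun j => if j == i then s.1 i else 0], 0).
split; [|split].
- apply/rset_centeredP => [j|j]; first by rewrite /= HA0.
  rewrite /crd /= !ffunE; case: (boolP (j == i)) => hj; first by rewrite normr0 mulr0 normr0.
  by rewrite normrM ger0_norm ?ler0n //; exact: H1.
- apply/rset_centeredP => [j|j]; first by rewrite /= HA0.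
  rewrite /crd /= !ffunE; case: (boolP (j == i)) => hj; last by rewrite normr0.
  by rewrite (eqP hj) normrM (gtr0_norm (x := 5 * q)) ?mulr_gt0 ?q_gt0 // -mulrA.
- case: s {H1 H2} => s1 s2; rewrite /padd /=; congr pair; last by rewrite addr0.
  apply/ffunP => j; rewrite !ffunE.
  by case: (boolP (j == i)) => hj; [rewrite (eqP hj) add0r|rewrite addr0].
Qed.

(* If [ys = phi D . yr] with [D] small off the i-th axis, the separation hypothesis forces
   [D_i] to be large: otherwise a point of the i-axis within [5 q A_i] of both [0] and [D_i]
   gives a common point of the two translates of [sep_box]. *)
Lemma sep_box_separation yr ys (D : pt l Gam) :
  XH yr -> XH ys -> Dom D -> ys = act (phi D) yr ->
  (forall j, j != i -> `|crd D j| + rad_Z j <= pow2l 19 * rad_A j) ->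
  (forall j, pow2l 19 * rad_A j + 5 * (q * rad_A j) <= rad_dom j) ->
  2 * rad_Z i + 1 <= 10 * (q * rad_A i) ->
  (forall z, ~ (phiset act Phi sep_box yr z /\ phiset act Phi sep_box ys z)) ->
  10 * (q * rad_A i) - rad_Z i - 1 < `|crd D i|.
Proof.
move=> Hyr Hys DD HysD HDj Hdd Hzq Hdisj.
rewrite ltNge; apply/negP; rewrite ler_norml => /andP[s1 s2].
have z0 := rad_Z_ge1 i; have qa := qrad_A_ge0.
have Na j : 0 <= pow2l 19 * rad_A j by rewrite mulr_ge0 ?rad_A_ge0 // ler0n.
have [n [e1 e2 e3 e4]] : exists n : int,
   [/\ - (5 * (q * rad_A i)) <= n%:~R * 1, n%:~R * 1 <= 5 * (q * rad_A i),
       crd D i - (5 * (q * rad_A i) - rad_Z i) <= n%:~R * 1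
     & n%:~R * 1 <= crd D i + (5 * (q * rad_A i) - rad_Z i)].
  by apply: (@int_multiple_in_intervals 1); move: (qa i); lra.
rewrite !mulr1 in e1 e2 e3 e4.
pose u : pt l Gam := ([ffun j => if j == i then n else 0], 0).
have cru j : crd u j = if j == i then n%:~R else 0.
  by rewrite /crd /u /= ffunE; case: (j == i).
have Du : Dom u.
  apply/domP => j; rewrite cru; move: (Hdd j) (qa j) (Na j).
  by case: (boolP (j == i)) => [/eqP ->|_]; rewrite ?normr0 ?ler_norml; lra.
have Hs : Defs.subset (fun v => exists z, Zs z /\ v = padd (padd u (popp D)) z) Dom.
  apply: dom_addZ => j; rewrite crdD crdN cru; have := Hdd j; have := qa j; have := Na j.
  case: (boolP (j == i)) => [/eqP ->|hj] h1 h2 h3; last by move: (HDj j hj); rewrite add0r normrN; lra.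
  by rewrite -lerBrDr ler_norml; lra.
case: (phi_act_rebase Hys Du DD HysD Hs) => z' [Hz' He].
apply: (Hdisj (act (phi u) yr)); split.
  exists u; split; last by split.
  apply: sep_box_mem => [j hj|]; first by rewrite cru (negbTE hj) normr0.
  by rewrite cru eqxx ler_norml; apply/andP; split; lra.
exists (padd (padd u (popp D)) z'); split; last by split => //; apply: Hs; exists z'.
have zb := crd_Z Hz'.
apply: sep_box_mem => [j hj|].
  rewrite !crdD crdN cru (negbTE hj) add0r.
  apply: le_trans (ler_normD _ _) (le_trans _ (HDj j hj)).
  by rewrite normrN lerD2l; exact: zb.
rewrite !crdD crdN cru eqxx.
by move: (zb i); rewrite !ler_norml => /andP[f1 f2]; apply/andP; split; lra.
Qed.

(* The grid: in coordinate [j], the multiples [(n - grid_half) * mesh j] for [n < grid_size],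
   where the mesh is about [A_j / 2]; it covers [2^(17 l) . A] with room to spare. *)
Definition grid_half : nat := (2 ^ (17 * l + 3))%N.
Definition grid_size : nat := (2 ^ (17 * l + 4))%N.
Definition mesh (j : 'I_l) : int := Num.floor (rad_A j / 2).
Definition grid_pt (f : {ffun 'I_l -> 'I_grid_size}) : pt l Gam :=
  ([ffun j => ((f j)%:Z - grid_half%:Z) * mesh j], 0).

Lemma grid_half_R : (grid_half%:R : R) = 8 * pow2l 17.
Proof. by rewrite /grid_half /pow2l natrXE expnD natrM mulrC. Qed.

Lemma grid_coord (k : int) : `|(k%:~R : R)| < 8 * pow2l 17 ->
  exists n : 'I_grid_size, (n : nat)%:Z - grid_half%:Z = k.
Proof.
move=> H.
have Hk : (`|k| < grid_half%:Z)%R by rewrite -(ltr_int R) intr_norm -pmulrn grid_half_R.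
have h0 : (0 <= k + grid_half%:Z)%R.
  by move: Hk; rewrite ltr_norml => /andP[h _]; rewrite -lerBlDr sub0r ltW.
have hl : (absz (k + grid_half%:Z)%R < grid_size)%N.
  rewrite /grid_size addnS expnS -/grid_half -ltz_nat gez0_abs // -(ltr_int R).
  rewrite intrD -!pmulrn natrM grid_half_R.
  by move: H; rewrite ltr_norml => /andP[_ h]; lra.
by exists (Ordinal hl) => /=; rewrite gez0_abs // addrK.
Qed.

Lemma mesh_bounds j : 48 < rad_A j ->
  [/\ 0 < ((mesh j)%:~R : R), ((mesh j)%:~R : R) <= rad_A j / 2
    & rad_A j / 2 - 1 < ((mesh j)%:~R : R)].
Proof.
move=> h; have f1 := floor_le (rad_A j / 2); have f2 := floorD1_gt (rad_A j / 2).
by rewrite intrD in f2; rewrite /mesh; split; lra.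
Qed.

Lemma grid_index_bound j (k : int) (s : R) : 48 < rad_A j ->
  `|s| <= pow2l 17 * rad_A j -> `|k%:~R * (mesh j)%:~R - s| <= rad_A j ->
  `|(k%:~R : R)| < 8 * pow2l 17.
Proof.
move=> ha hs hk; case: (mesh_bounds ha) => m0 m1 m2; case: pow2l_facts => N1 _ _.
rewrite ltNge; apply/negP => hk8.
have hkm : 8 * pow2l 17 * (mesh j)%:~R <= `|(k%:~R : R)| * (mesh j)%:~R.
  by apply: ler_wpM2r => //; apply: ltW.
have hNm : pow2l 17 * (rad_A j / 2 - 1) <= pow2l 17 * (mesh j)%:~R.
  by apply: ler_wpM2l; lra.
have hab : `|(k%:~R : R)| * (mesh j)%:~R <= pow2l 17 * rad_A j + rad_A j.
  rewrite -(gtr0_norm m0) -normrM -[X in `|X|](subrK s).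
  by apply: le_trans (ler_normD _ _) _; lra.
have : pow2l 17 * (rad_A j / 2 - 1) = pow2l 17 * rad_A j / 2 - pow2l 17.
  by rewrite mulrBr mulr1 mulrA.
have : 48 * pow2l 17 <= rad_A j * pow2l 17 by apply: ler_wpM2r; lra.
have : rad_A j <= pow2l 17 * rad_A j by rewrite ler_peMl //; lra.
lra.
Qed.

Lemma grid_coord_near delta (B : srect l) w U (b : pt l Gam) (s : R) j : rect_witness delta B w U ->
  `|crd b j - (sc B j)%:~R| <= `|sr B j| + delta * `|sr B j| -> `|s| <= pow2l 17 * rad_A j ->
  exists n : 'I_grid_size, let g := ((((n : nat)%:Z - grid_half%:Z) * mesh j)%:~R : R) in
    `|g - s - ((sc B j)%:~R - crd b j)| <= `|sr B j| - delta * `|sr B j| - 2 * rad_Z j /\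
    `|g - s| <= rad_A j.
Proof.
move=> W Hout Hs.
case: (witness_bounds W j) => h1 h2 h3 h4 hd.
case: (witness_param_bounds h1 h2 h3) => n1 n2 n3 n4 n5.
case: (radius_pow2l_bounds h1 hd) => b1 b2 b3 b4.
have z1 := rad_Z_ge1 j.
have [m0 m1 m2] := @mesh_bounds j ltac:(lra).
move: Hout; rewrite ler_norml => /andP[o1 o2].
have [k [e1 e2 e3 e4]] := @int_multiple_in_intervals ((mesh j)%:~R : R)
   (s + ((sc B j)%:~R - crd b j) - (`|sr B j| - delta * `|sr B j| - 2 * rad_Z j)) (s - rad_A j)
   (s + ((sc B j)%:~R - crd b j) + (`|sr B j| - delta * `|sr B j| - 2 * rad_Z j)) (s + rad_A j)
   m0 ltac:(lra) ltac:(lra) ltac:(lra) ltac:(lra).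
have hk : `|k%:~R * (mesh j)%:~R - s| <= rad_A j by rewrite ler_norml; apply/andP; split; lra.
case: (grid_coord (grid_index_bound (ltac:(lra) : 48 < rad_A j) Hs hk)) => n hn.
exists n; rewrite /= hn intrM; split; last exact: hk.
by rewrite ler_norml; apply/andP; split; lra.
Qed.

Section RectangularClasses.
Variable F : X -> X -> Prop.
Hypothesis HF : rectangular act Phi A eps F.

Lemma F_refl y0 : F y0 y0. Proof. by case: HF => [[h _] _]. Qed.
Lemma F_sym y1 y2 : F y1 y2 -> F y2 y1. Proof. by case: HF => [[_ [h _]] _]; apply: h. Qed.
Lemma F_trans y1 y2 y3 : F y1 y2 -> F y2 y3 -> F y1 y3.
Proof. by case: HF => [[_ [_ h]] _]; apply: h. Qed.

Lemma rect_class_witness y0 : XH y0 -> exists delta (B : srect l) w, rect_witness delta B w (F y0).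
Proof.
move=> Hy; case: HF => _ [_ Hr].
case: (Hr y0); first by exists y0; split => //; exact: F_refl.
by move=> delta [B [w [_ [_ [Hro [HAB [H22 H2]]]]]]]; exists delta, B, w.
Qed.

Lemma grid_point_in_class x y0 s0 : XH y0 -> Dom s0 -> y0 = act (phi s0) x ->
  (forall j, `|crd s0 j| <= pow2l 17 * rad_A j) ->
  exists f : {ffun 'I_l -> 'I_grid_size}, F y0 (act (phi (grid_pt f)) x).
Proof.
move=> Hy Ds Hxs Bs.
case: (rect_class_witness Hy) => delta [B [w W]].
have NF := witness_coord_bounds W.
case: (rough_outer_coords W (F_refl y0)) => b [Db Hb Hout].
have [fk Hfk] := fin_all_exists (fun j => grid_coord_near W (Hout j) (Bs j)).
exists [ffun j => fk j]; set g := grid_pt _.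
have crg j : crd g j = ((((fk j : nat)%:Z - grid_half%:Z) * mesh j)%:~R : R).
  by rewrite /crd /g /grid_pt /= !ffunE.
have Dg : Dom g.
  apply/domP => j; rewrite crg; case: (Hfk j) => _; case: (NF j) => _ _ _ _ [_ h1 h2].
  move: (Bs j); rewrite !ler_norml => /andP[u1 u2] /andP[v1 v2].
  by apply/andP; split; move: (rad_Z_ge1 j); lra.
case: (phi_act_relative Hy Ds Dg Hxs erefl) => [j|z [Hz DD ->]].
  rewrite crg; case: (Hfk j) => _ h; case: (NF j) => _ _ _ _ [_ h1 h2].
  by move: (rad_A_ge0 j); lra.
apply: (rough_core_mem W Db Hb DD) => j; rewrite !crdD crdN crg.
case: (Hfk j) => h _.
move: h (crd_Z Hz j); rewrite !ler_norml => /andP[u1 u2] /andP[v1 v2].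
by apply/andP; split; lra.
Qed.
Lemma face_miss_sub U U' y0 k : (forall p, U' p -> U p) -> face_miss U y0 k -> face_miss U' y0 k.
Proof. by move=> h H v Hv Dv /h; apply: H. Qed.

Lemma boundary_face_miss E y0 : (forall a b, F a b -> E a b) ->
  boundary act Phi E (scale q A) i y0 ->
  face_miss (F y0) y0 (Lr (scale q A) i) \/ face_miss (F y0) y0 (- Lr (scale q A) i).
Proof.
move=> HFE [_ Hb].
case: (Classical_Prop.classic (face_miss (F y0) y0 (Lr (scale q A) i))) => hp; [by left|right].
move=> vm Hvm Dvm Fm; apply: hp => vp Hvp Dvp Fp; apply: (Hb y0); split.
  by exists (act (phi vm) y0); split; [exists vm|apply: HFE; apply: F_sym].
by exists (act (phi vp) y0); split; [exists vp|apply: HFE; apply: F_sym].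
Qed.

(* Two F-equivalent points missing the same face both lie near the same i-side of the
   class, hence close in the i-direction; this contradicts the separation hypothesis. *)
Lemma same_key_contra x yr ys sr0 ss k :
  XH yr -> XH ys -> F yr ys ->
  Dom sr0 -> Dom ss -> yr = act (phi sr0) x -> ys = act (phi ss) x ->
  (forall j, `|crd sr0 j| <= pow2l 17 * rad_A j) -> (forall j, `|crd ss j| <= pow2l 17 * rad_A j) ->
  q * rad_A i - 1 < `|(k%:~R : R)| -> `|(k%:~R : R)| <= q * rad_A i ->
  face_miss (F yr) yr k -> face_miss (F ys) ys k ->
  (forall z, ~ (phiset act Phi sep_box yr z /\ phiset act Phi sep_box ys z)) -> False.
Proof.
move=> Hyr Hys Frs Dsr Dss Hxr Hxs Bsr Bss Hk1 Hk2 Hmr Hms Hdisj.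
case: (rect_class_witness Hyr) => delta [B [w W]].
have NF := witness_coord_bounds W.
case: (rough_outer_coords W (F_refl yr)) => br [Dbr Hbr Hout_r].
case: (rough_outer_coords W Frs) => bs [Dbs Hbs Hout_s].
have nr := face_miss_outside_core W Dbr Hbr Hout_r Hk2 Hmr.
have Hms' : face_miss (F yr) ys k by apply: face_miss_sub Hms => p; apply/F_trans/F_sym.
have ns := face_miss_outside_core W Dbs Hbs Hout_s Hk2 Hms'.
case: (phi_act_relative Hyr Dsr Dss Hxr Hxs) => [j|z2 [Hz2 DD2 Hx2]].
  case: (NF j) => _ _ _ _ [_ h _].
  move: (Bsr j) (Bss j); rewrite !ler_norml => /andP[u1 u2] /andP[v1 v2].
  by rewrite -lerBrDr ler_norml; apply/andP; split; lra.
case: (phi_act_relative Hyr Dbr Dbs Hbr Hbs) => [j|z1 [Hz1 DD1 Hw1]].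
  case: (NF j) => _ _ _ _ [h _ _].
  move: (Hout_r j) (Hout_s j); rewrite !ler_norml => /andP[u1 u2] /andP[v1 v2].
  have c0 := norm_bounds ((sc B j)%:~R : R).
  by rewrite -lerBrDr ler_norml; apply/andP; split; lra.
have Heq := phi_act_inj Hyr DD2 DD1 (etrans (esym Hx2) Hw1).
have Hsep := sep_box_separation Hyr Hys DD2 Hx2.
have Hd1 : 10 * (q * rad_A i) - rad_Z i - 1 < `|crd (padd (padd ss (popp sr0)) z2) i|.
  apply: Hsep => //; last by case: (NF i).
  - move=> j hj; rewrite !crdD crdN; case: (NF j) => _ _ _ h _.
    move: (Bsr j) (Bss j) (crd_Z Hz2 j).
    rewrite !ler_norml => /andP[u1 u2] /andP[v1 v2] /andP[w1 w2].
    by rewrite -lerBrDr ler_norml; apply/andP; split; lra.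
  - by move=> j; case: (NF j).
case: (witness_bounds W i) => h1 h2 h3 h4 hd.
case: (witness_param_bounds h1 h2 h3) => n1 n2 n3 n4 n5.
have db0 : 0 <= delta * `|sr B i| by rewrite mulr_ge0 // ltW //; case/andP: hd.
apply: (@missed_face_offsets_close (`|sr B i|) (delta * `|sr B i|) (rad_Z i) (q * rad_A i)
  (eps * rad_A i) k%:~R ((sc B i)%:~R - crd br i) ((sc B i)%:~R - crd bs i) (crd z1 i)
  (crd (padd (padd ss (popp sr0)) z2) i)) => //.
- exact: rad_Z_ge1.
- by rewrite distrC.
- by rewrite distrC.
- by rewrite Heq !crdD crdN; lra.
- exact: crd_Z.
Qed.

Lemma phiset_scaled_A_coords x y0 :
  phiset act Phi (rset (Gam:=Gam) (scale (pow2l 17) A)) x y0 ->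
  exists s0, [/\ Dom s0, y0 = act (phi s0) x & forall j, `|crd s0 j| <= pow2l 17 * rad_A j].
Proof.
case=> s0 [Hs0 [Ds0 He]]; exists s0; split => // j.
move: Hs0; rewrite rset_centeredP; last by case: HA => _ h j'; rewrite /scale /= h.
by move=> /(_ j); rewrite sr_scale normrM ger0_norm // ler0n.
Qed.

Lemma boundary_point_key E x y0 : (forall a b, F a b -> E a b) ->
  boundary act Phi E (scale q A) i y0 ->
  phiset act Phi (rset (Gam:=Gam) (scale (pow2l 17) A)) x y0 ->
  exists key : {ffun 'I_l -> 'I_grid_size} * bool,
    F y0 (act (phi (grid_pt key.1)) x) /\
    face_miss (F y0) y0 (if key.2 then Lr (scale q A) i else - Lr (scale q A) i).
Proof.
move=> HFE Hb /phiset_scaled_A_coords [s0 [Ds0 He Bs]].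
have [f Hf] := grid_point_in_class (proj1 Hb) Ds0 He Bs.
by case: (boundary_face_miss HFE Hb) => hs; [exists (f, true)|exists (f, false)].
Qed.

Lemma grid_keys_card : (#|{: {ffun 'I_l -> 'I_grid_size} * bool}| <= 2 ^ (22 * l ^ 2))%N.
Proof.
rewrite card_prod card_ffun !card_ord card_bool /grid_size -expnM -expnSr leq_exp2l //.
by have := l_gt0; nia.
Qed.

Lemma boundary_points_count E x (t : nat) (y : 'I_t -> X) :
  (forall a b, F a b -> E a b) ->
  (forall r, boundary act Phi E (scale q A) i (y r)) ->
  (forall r, phiset act Phi (rset (Gam:=Gam) (scale (pow2l 17) A)) x (y r)) ->
  (forall r s, r != s -> forall z,
     ~ (phiset act Phi sep_box (y r) z /\ phiset act Phi sep_box (y s) z)) ->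
  (t <= 2 ^ (22 * l ^ 2))%N.
Proof.
move=> HFE Hyb Hyx Hdisj.
have [key Hkey] := fin_all_exists (fun r => boundary_point_key HFE (Hyb r) (Hyx r)).
have [L1 L2 L0] := face_offset_bounds.
suff inj : injective key by rewrite -[t]card_ord; apply: leq_trans (leq_card key inj) grid_keys_card.
move=> r s Hrs; apply/eqP/negP => /negP hne.
case: (Hkey r) (Hkey s) => Fr Mr [Fs Ms]; rewrite -Hrs in Fs Ms.
case: (phiset_scaled_A_coords (Hyx r)) => sr0 [Dr Er Br].
case: (phiset_scaled_A_coords (Hyx s)) => ss [Ds Es Bs].
have Frs : F (y r) (y s) by apply: F_trans Fr _; apply: F_sym.
apply: (same_key_contra (proj1 (Hyb r)) (proj1 (Hyb s)) Frs Dr Ds Er Es Br Bs _ _ Mr Ms);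
  last exact: Hdisj.
all: by case: (key r).2; rewrite ?intrN ?normrN ger0_norm //; lra.
Qed.
End RectangularClasses.
End RoughRectangles.

Theorem lemma6p5 (G : countType) (Gg : group_on G) (X : Type)
  (act : G -> X -> X) (Hact : is_action Gg act)
  (l : nat) (Gam : finZmodType) (Phi : chart G l Gam) (HPhi : is_chart Gg Phi)
  (eps q : R) (Heps : 0 < eps < 1 / 16) (Hq : 6 * eps < q < 1 / 2)
  (A : srect l) (HA : is_centered_rect A)
  (E : X -> X -> Prop) (HE : is_equiv E)
  (Hsub : sub_rectangular act Phi A eps E)
  (x : X) (Hx : inXH act Phi x) (i : 'I_l)
  (t : nat) (y : 'I_t -> X)
  (Hyb : forall r, boundary act Phi E (scale q A) i (y r))
  (Hyx : forall r, phiset act Phi (rset (Gam:=Gam) (scale (2 ^+ (17 * l))%:R A)) x (y r))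
  (Hdisj : forall r s, r != s -> forall z,
     ~ (phiset act Phi (msum (rset (Gam:=Gam) (scale (2 ^+ (19 * l))%:R (face A i)))
                             (rset (Gam:=Gam) (scale (5 * q) A))) (y r) z /\
        phiset act Phi (msum (rset (Gam:=Gam) (scale (2 ^+ (19 * l))%:R (face A i)))
                             (rset (Gam:=Gam) (scale (5 * q) A))) (y s) z)) :
  (t <= 2 ^ (22 * l ^ 2))%N.
Proof.
case: Hsub => F [HF HFE].
exact: (boundary_points_count Hact HPhi Heps Hq HA HF HFE Hyb Hyx Hdisj).
Qed.
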